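(* There is an algorithm that, given an integer $k\ge 1$ and a finite multiset $D$ of $n$ nonnegative integers, decides in $O(n\log n)$ time whether there exists a rooted $k$-ary tree whose multiset of node depths equals $D$.
   Context: A rooted $k$-ary tree is a rooted tree in which every node has at most $k$ children. The depth of a node is the number of edges on the path from it to the root; the multiset of depths has one entry per node. Running time is measured with arithmetic on the input integers taking unit time. *)

From mathcomp Require Import all_boot all_order all_algebra.
Set Implicit Arguments. Unset Strict Implicit. Unset Printing Implicit Defensive.
Import Order.TTheory GRing.Theory Num.Theory.

Inductive tree : Type := Node of seq tree.

(* Multiset (as a list, compared up to permutation) of node depths, one entry
   per node; the root has depth 0. *)
Fixpoint depths (t : tree) : seq nat :=
  let: Node cs := t in
  0 :: flatten (map (fun c => map S (depths c)) cs).

Fixpoint kary (k : nat) (t : tree) : bool :=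
  let: Node cs := t in (size cs <= k) && all (kary k) cs.

(* Memory: infinitely many cells indexed by nat, each holding an (unbounded)
   integer; arithmetic (+, -, * ) and comparison take unit time; indirect
   addressing is allowed. *)
Inductive instr : Type :=
  | IConst of nat & int          (* m[r] := z *)
  | IAdd of nat & nat & nat      (* m[r] := m[a] + m[b] *)
  | ISub of nat & nat & nat      (* m[r] := m[a] - m[b] *)
  | IMul of nat & nat & nat      (* m[r] := m[a] * m[b] *)
  | ILoad of nat & nat           (* m[r] := m[ m[a] ] *)
  | IStore of nat & nat          (* m[ m[a] ] := m[r] *)
  | IJlt of nat & nat & nat      (* if m[a] < m[b] then goto l *)
  | IJmp of nat                  (* goto l *)
  | IHalt.

Definition program := seq instr.
Definition memory := nat -> int.
Definition config : Type := (nat * memory)%type.   (* program counter, memory *)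

(* Address denoted by an integer (negative integers denote cell 0). *)
Definition addr (z : int) : nat := if z is Posz p then p else 0.

Definition upd (m : memory) (r : nat) (v : int) : memory :=
  fun i => if i == r then v else m i.

Definition halted (P : program) (c : config) : bool :=
  if nth IHalt P c.1 is IHalt then true else false.

Definition step (P : program) (c : config) : config :=
  let: (pc, m) := c in
  match nth IHalt P pc with
  | IConst r z => (pc.+1, upd m r z)
  | IAdd r a b => (pc.+1, upd m r (m a + m b)%R)
  | ISub r a b => (pc.+1, upd m r (m a - m b)%R)
  | IMul r a b => (pc.+1, upd m r (m a * m b)%R)
  | ILoad r a => (pc.+1, upd m r (m (addr (m a))))
  | IStore a r => (pc.+1, upd m (addr (m a)) (m r))
  | IJlt a b l => (if (m a < m b)%R then l else pc.+1, m)
  | IJmp l => (l, m)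
  | IHalt => (pc, m)
  end.

Definition init (k : nat) (D : seq nat) : config :=
  (0, fun i => if i == 0 then (k%:Z)%R
               else if i == 1 then ((size D)%:Z)%R
               else if i < (size D).+2 then ((nth 0 D (i - 2))%:Z)%R
               else 0%R).

Definition output (c : config) : bool := (c.2 0 != 0)%R.

Definition run (P : program) (t : nat) (c : config) : config := iter t (step P) c.

Definition kary_depth_realizable (k : nat) (D : seq nat) : Prop :=
  exists t : tree, kary k t /\ perm_eq (depths t) D.

(* Write c_d for the number of occurrences of d in D.  D is the depth multiset
   of a k-ary tree iff c_0 = 1 and c_(d+1) <= k * c_d for every d: the nodes at
   depth d+1 are shared among the c_d nodes at depth d, at most k each, and
   conversely a forest with this profile is built bottom-up, grouping the roots
   of level d+1 into c_d bundles of at most k children.  A RAM program checks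
   the condition in linear time by counting sort: a depth x >= n refutes it at
   once, since then 0, ..., x would be n+1 distinct depths in D. *)

From mathcomp Require Import all_boot all_order all_algebra.
From mathcomp Require Import zify.
Set Implicit Arguments. Unset Strict Implicit. Unset Printing Implicit Defensive.
Set Bullet Behavior "Strict Subproofs".

Definition subtrees (t : tree) : seq tree := let: Node cs := t in cs.
Definition forest_children (fs : seq tree) : seq tree := flatten (map subtrees fs).
Definition forest_depths (fs : seq tree) : seq nat := flatten (map depths fs).

Lemma forest_depths_cat fs gs :
  forest_depths (fs ++ gs) = forest_depths fs ++ forest_depths gs.
Proof. by rewrite /forest_depths map_cat flatten_cat. Qed.

Lemma forest_depths_cons t fs :
  forest_depths (t :: fs) = depths t ++ forest_depths fs.
Proof. by []. Qed.

Lemma depths_Node cs : depths (Node cs) = 0 :: map S (forest_depths cs).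
Proof.
rewrite /=; congr (_ :: _); elim: cs => [|c cs IH] //=.
by rewrite IH /forest_depths /= map_cat.
Qed.

Lemma count_mem0_forest_depths fs : count_mem 0 (forest_depths fs) = size fs.
Proof.
elim: fs => [|[cs] fs IH] //.
rewrite forest_depths_cons depths_Node count_cat /= count_map IH.
by rewrite (@eq_count _ _ pred0) ?count_pred0.
Qed.

Lemma count_memS_forest_depths d fs :
  count_mem d.+1 (forest_depths fs) = count_mem d (forest_depths (forest_children fs)).
Proof.
elim: fs => [|[cs] fs IH] //.
rewrite forest_depths_cons depths_Node count_cat /= count_map IH.
by rewrite /forest_children /= forest_depths_cat count_cat.
Qed.

Lemma size_forest_children k fs :
  all (kary k) fs -> size (forest_children fs) <= k * size fs.
Proof.
elim: fs => [|[cs] fs IH] //= /andP[/andP[kcs _] kfs].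
by rewrite size_cat mulnS leq_add ?IH.
Qed.

Lemma kary_forest_children k fs : all (kary k) fs -> all (kary k) (forest_children fs).
Proof.
elim: fs => [|[cs] fs IH] //= /andP[/andP[_ kcs] kfs].
by rewrite all_cat kcs IH.
Qed.

Lemma kary_count_depthS k d fs : all (kary k) fs ->
  count_mem d.+1 (forest_depths fs) <= k * count_mem d (forest_depths fs).
Proof.
elim: d fs => [|d IH] fs kfs.
  by rewrite count_memS_forest_depths !count_mem0_forest_depths size_forest_children.
by rewrite !(count_memS_forest_depths _ fs) IH ?kary_forest_children.
Qed.

Lemma chunk_seq (T : Type) k m (s : seq T) : size s <= k * m ->
  exists ss : seq (seq T),
    [/\ size ss = m, all (fun x => size x <= k) ss & flatten ss = s].
Proof.
elim: m s => [|m IH] s.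
  by rewrite muln0 leqn0 => /nilP ->; exists [::].
rewrite mulnS => hs.
have [ss [sz_ss ss_k ss_s]] : exists ss : seq (seq T),
    [/\ size ss = m, all (fun x => size x <= k) ss & flatten ss = drop k s].
  by apply: IH; rewrite size_drop leq_subLR.
exists (take k s :: ss); split; first by rewrite /= sz_ss.
  by rewrite /= ss_k size_take andbT; case: ltnP.
by rewrite /= ss_s cat_take_drop.
Qed.

Lemma forest_of_children k m F : all (kary k) F -> size F <= k * m ->
  exists fs, [/\ size fs = m, all (kary k) fs & forest_children fs = F].
Proof.
move=> kF /chunk_seq[ss [sz_ss ss_k ss_F]]; subst F.
exists (map Node ss); split; first by rewrite size_map.
  move: kF; elim: ss ss_k {sz_ss} => [|cs ss IH] //= /andP[-> ss_k].
  by rewrite all_cat => /andP[-> /(IH ss_k)].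
by rewrite /forest_children -map_comp map_id.
Qed.

Lemma kary_forest_of_counts k h (c : nat -> nat) :
  (forall d, c d.+1 <= k * c d) -> (forall d, h < d -> c d = 0) ->
  exists fs, all (kary k) fs /\ forall d, count_mem d (forest_depths fs) = c d.
Proof.
elim: h c => [|h IH] c c_k c_h.
  have [fs [sz_fs kfs ch_fs]] := @forest_of_children k (c 0) [::] isT (leq0n _).
  exists fs; split=> // -[|d]; first by rewrite count_mem0_forest_depths.
  by rewrite count_memS_forest_depths ch_fs c_h.
have [F [kF cF]] := IH (c \o S) (fun d => c_k d.+1) (fun d hd => c_h d.+1 hd).
have sz_F : size F <= k * c 0 by rewrite -count_mem0_forest_depths cF c_k.
have [fs [sz_fs kfs ch_fs]] := forest_of_children kF sz_F.
exists fs; split=> // -[|d]; first by rewrite count_mem0_forest_depths.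
by rewrite count_memS_forest_depths ch_fs cF.
Qed.

Definition kary_depth_profile k (D : seq nat) :=
  count_mem 0 D = 1 /\ forall d, count_mem d.+1 D <= k * count_mem d D.

Lemma kary_depth_realizableP k D :
  kary_depth_realizable k D <-> kary_depth_profile k D.
Proof.
split.
  move=> [t [kt /permP tD]].
  have cD d : count_mem d D = count_mem d (forest_depths [:: t]).
    by rewrite /forest_depths /= cats0 tD.
  split=> [|d]; first by rewrite cD count_mem0_forest_depths.
  by rewrite !cD kary_count_depthS //= kt.
move=> [D0 D_k].
have D_max d : \max_(x <- D) x < d -> count_mem d D = 0.
  move=> hd; apply/count_memPn/negP => dD.
  by move: hd; rewrite ltnNge (leq_bigmax_seq (F := id) _ dD isT).
have [[|t [|t' fs]] [kfs cfs]] := kary_forest_of_counts D_k D_max;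
  move: (cfs 0); rewrite count_mem0_forest_depths D0 //= => _.
exists t; split; first by move: kfs => /= /andP[].
by apply/allP => x _; apply/eqP; rewrite -cfs /forest_depths /= cats0.
Qed.

Lemma kary_depth_profile_lt_size k D x :
  kary_depth_profile k D -> x \in D -> x < size D.
Proof.
move=> [D0 D_k] xD.
have DP d : d.+1 \in D -> d \in D.
  rewrite -!has_pred1 !has_count => hd.
  by have := leq_trans hd (D_k d); case: (count_mem d D); rewrite ?muln0.
have below e d : d + e = x -> d \in D.
  elim: e d => [|e IH] d; first by rewrite addn0 => ->.
  by move=> hde; apply/DP/IH; rewrite addSnnS.
have := @uniq_leq_size _ (iota 0 x.+1) D (iota_uniq _ _).
rewrite size_iota; apply=> d; rewrite mem_iota add0n ltnS => hd.
by apply: (below (x - d)); rewrite subnKC.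
Qed.

Definition reaches (P : program) (c : config) (Q : config -> Prop) (T : nat) :=
  exists2 s, s <= T & Q (run P s c).

Section Reaches.
Variable P : program.

Lemma reaches_now c (Q : config -> Prop) T : Q c -> reaches P c Q T.
Proof. by exists 0. Qed.

Lemma reaches_step c Q T : reaches P (step P c) Q T -> reaches P c Q T.+1.
Proof. by move=> [s hs hQ]; exists s.+1; rewrite /run ?iterSr. Qed.

Lemma reaches_weaken c (Q Q' : config -> Prop) T :
  (forall c', Q c' -> Q' c') -> reaches P c Q T -> reaches P c Q' T.
Proof. by move=> QQ' [s hs /QQ']; exists s. Qed.

Lemma reaches_trans c (Q1 Q2 : config -> Prop) T1 T2 : reaches P c Q1 T1 ->
  (forall c', Q1 c' -> reaches P c' Q2 T2) -> reaches P c Q2 (T1 + T2).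
Proof.
move=> [s hs /[swap] h /h [s' hs' hQ2]]; exists (s' + s); first lia.
by rewrite /run iterD.
Qed.

Lemma reaches_loop (Inv : nat -> config -> Prop) Q b :
  (forall j c, Inv j.+1 c -> reaches P c (fun c' => Inv j c' \/ Q c') b) ->
  (forall c, Inv 0 c -> reaches P c Q b) ->
  forall j c, Inv j c -> reaches P c Q (j.+1 * b).
Proof.
move=> body exit; elim=> [|j IH] c hc; first by rewrite mul1n; exact: exit.
rewrite mulSn; apply: reaches_trans (body _ _ hc) _ => c' [/IH //|hQ].
exact: reaches_now.
Qed.

Lemma run_halted c t : halted P c -> run P t c = c.
Proof.
move=> hc; have fixc : step P c = c.
  by move: hc; case: c => pc m; rewrite /halted /step /=; case: nth.
by elim: t => // t IH; rewrite /run iterS -/(run P t c) IH.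
Qed.

Lemma reaches_halted c (Q : config -> Prop) T t :
  (forall c', Q c' -> halted P c') -> T <= t -> reaches P c Q T -> Q (run P t c).
Proof.
move=> Qh tT [s hs hQ]; rewrite -(subnK (leq_trans hs tT)) /run iterD.
by rewrite -/(run P s c) -/(run P (t - s) _) run_halted // Qh.
Qed.

End Reaches.

(* With n = |D| and A = n + 8k (beyond the input because k >= 1): pcs 0-36 move
   k to cell A and the depths in cells 2..7 to A+2..A+7, freeing cells 0..7 as
   registers (1 = A, 2 = k, 3 = n, 4 = loop index); pcs 37-55 add one to cell
   A + 8 + x for every depth x of D, rejecting if x >= n; pcs 56-73 check that
   the counter of depth 0 is 1 and compare each counter with k times the
   previous one. *)
Definition depth_checker : program := [::
  IAdd 1 1 0; IAdd 1 1 0; IAdd 1 1 0; IAdd 1 1 0;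
  IAdd 1 1 0; IAdd 1 1 0; IAdd 1 1 0; IAdd 1 1 0;
  IStore 1 0;
  IConst 0 2; IAdd 0 0 1; IStore 0 2;
  IConst 0 3; IAdd 0 0 1; IStore 0 3;
  IConst 0 4; IAdd 0 0 1; IStore 0 4;
  IConst 0 5; IAdd 0 0 1; IStore 0 5;
  IConst 0 6; IAdd 0 0 1; IStore 0 6;
  IConst 0 7; IAdd 0 0 1; IStore 0 7;
  ILoad 2 1;
  ISub 3 1 2; ISub 3 3 2; ISub 3 3 2; ISub 3 3 2;
  ISub 3 3 2; ISub 3 3 2; ISub 3 3 2; ISub 3 3 2;
  IConst 4 0;
  (* 37 *) IJlt 4 3 39; IJmp 56;
  (* 39 *) IConst 6 2; IAdd 7 4 6; IConst 6 5; IJlt 6 4 44;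
  (* 43 *) IAdd 7 7 1;
  (* 44 *) ILoad 5 7; IJlt 5 3 47; IJmp 76;
  (* 47 *) IConst 6 8; IAdd 7 1 6; IAdd 7 7 5; ILoad 6 7;
  (* 51 *) IConst 0 1; IAdd 6 6 0; IStore 7 6; IAdd 4 4 0; IJmp 37;
  (* 56 *) IConst 6 8; IAdd 7 1 6; ILoad 5 7; IConst 6 1;
  (* 60 *) IJlt 5 6 76; IJlt 6 5 76; IAdd 4 7 3;
  (* 63 *) IConst 6 1; IAdd 6 7 6; IJlt 6 4 67; IJmp 74;
  (* 67 *) ILoad 5 7; IMul 5 5 2; ILoad 0 6; IJlt 5 0 76;
  (* 71 *) IConst 0 0; IAdd 7 6 0; IJmp 63;
  (* 74 *) IConst 0 1; IHalt;
  (* 76 *) IConst 0 0; IHalt ].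

Arguments upd _ _ _ _ /.

Section DepthChecker.
Variables (k : nat) (D : seq nat).
Hypothesis k_gt0 : 1 <= k.
Let n := size D.
Let A := n + 8 * k.
Let C := A + 8.

Definition depth_cell j := if j < 6 then j + 2 + A else j + 2.

Ltac exec_instr := apply: reaches_step; rewrite /step {2}/depth_checker /=.
Ltac decide_addr_eqs := repeat match goal with
  | |- context [?x == ?y :> nat] =>
    let h := fresh in
    first [ have h : (x == y) = false by lia | have h : (x == y) = true by lia ];
    rewrite h; clear h
  end.
Ltac rewrite_mem :=
  repeat match goal with H : @eq int (?f ?a) _ |- context [?f ?a] => rewrite H end.
Ltac fold_nat_arith := rewrite -?PoszD -?PoszM /addr.
Ltac fold_nat_sub := repeat match goal with
  | |- context [(Posz ?a - Posz ?b)%R] => rewrite (@subzn a b ltac:(lia))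
  end.
Ltac exec := exec_instr; rewrite_mem; fold_nat_arith; decide_addr_eqs; rewrite ?ltz_nat.

Definition counting_inv (i : nat) (c : config) :=
  [/\ c.1 = 37, c.2 1 = Posz A, c.2 2 = Posz k, c.2 3 = Posz n &
   [/\ c.2 4 = Posz i, i <= n, forall j, j < n -> c.2 (depth_cell j) = Posz (nth 0 D j),
     forall d, c.2 (C + d) = Posz (count_mem d (take i D)) &
     all (fun x => x < n) (take i D)]].

Lemma setup_reaches_counting m : m 0 = Posz k -> m 1 = Posz n ->
  (forall j, j < n -> m (j + 2) = Posz (nth 0 D j)) ->
  (forall i, n + 2 <= i -> m i = 0%R) ->
  reaches depth_checker (0, m) (counting_inv 0) 40.
Proof.
move=> m0 m1 mD m0_above.
do 27 (exec_instr; rewrite ?m0 ?m1; fold_nat_arith; decide_addr_eqs).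
exec_instr; fold_nat_arith; decide_addr_eqs.
do 8 (exec_instr; fold_nat_arith; fold_nat_sub; decide_addr_eqs).
exec_instr.
apply: reaches_now; rewrite /counting_inv /=; split=> //; try decide_addr_eqs.
- by congr Posz; rewrite /A; lia.
- by congr Posz; lia.
- split=> //.
  + move=> j hj; rewrite /depth_cell /A; case: (ltnP j 6) => hj6.
      by case: j hj hj6 => [|[|[|[|[|[|j]]]]]] // hj _; decide_addr_eqs; exact: (mD _ hj).
    by decide_addr_eqs; exact: (mD _ hj).
  + by move=> d; rewrite /C /A; decide_addr_eqs; rewrite m0_above ?take0 //; lia.
  + by rewrite take0.
Qed.

Definition answered (c : config) :=
  halted depth_checker c /\ (output c <-> kary_depth_profile k D).
Definition counting_left j c := exists2 i, i + j = n & counting_inv i c.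

Lemma counting_step j c : counting_left j.+1 c ->
  reaches depth_checker c (fun c' => counting_left j c' \/ answered c') 20.
Proof.
case: c => pc m [i hij [/= -> m1 m2 m3 [m4 le_in m_depth m_count cnt_lt]]].
have i_lt_n : i < n by lia.
exec_instr; rewrite m4 m3 ltz_nat i_lt_n.
do 4 exec.
have xD : nth 0 D i \in D by apply: mem_nth.
set x := nth 0 D i.
have m_x a : a = depth_cell i -> m a = Posz x by move=> ->; exact: m_depth.
have m_cx a : a = C + x -> m a = Posz (count_mem x (take i D)) by move=> ->.
case: (ltnP x n) => x_n.
- case: ifP => i_gt5; [exec; rewrite m_x; [|by rewrite /depth_cell ifN //; lia] |
    exec; exec; rewrite m_x; [|by rewrite /depth_cell ifT //; lia]].
  all: exec; rewrite x_n; do 4 exec; rewrite m_cx; last lia; do 5 exec;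
  apply: reaches_now; left; exists i.+1; first lia;
  rewrite /counting_inv /=; decide_addr_eqs; rewrite_mem; split=> //; split=> //; [
    by rewrite addn1 |
    move=> j0 hj0; move: (m_depth j0 hj0); rewrite /depth_cell;
      case: ltnP => j0_lt6; decide_addr_eqs => // |
    move=> d; rewrite (take_nth 0 i_lt_n) -cats1 count_cat /=;
      case: (eqVneq x d) => [<-|hd]; decide_addr_eqs;
      [by rewrite addn0 | by rewrite m_count !addn0] |
    by rewrite (take_nth 0 i_lt_n) all_rcons x_n cnt_lt].
- have x_lt_nF : (x < n) = false by rewrite ltnNge x_n.
  case: ifP => i_gt5; [exec; rewrite m_x; [|by rewrite /depth_cell ifN //; lia] |
    exec; exec; rewrite m_x; [|by rewrite /depth_cell ifT //; lia]];
  exec; rewrite x_lt_nF /=.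
  all: do 2 exec; apply: reaches_now; right; split=> //; rewrite /output /=;
    split=> // /kary_depth_profile_lt_size /(_ xD); by rewrite ltnNge x_n.
Qed.

Definition counted (c : config) :=
  [/\ c.1 = 56, c.2 1 = Posz A, c.2 2 = Posz k, c.2 3 = Posz n &
   (forall d, c.2 (C + d) = Posz (count_mem d D)) /\ all (fun x => x < n) D].

Lemma counting_exit c : counting_left 0 c ->
  reaches depth_checker c (fun c' => counted c' \/ answered c') 20.
Proof.
case: c => pc m [i hij [/= -> m1 m2 m3 [m4 le_in m_depth m_count cnt_lt]]].
rewrite addn0 in hij; subst i.
exec; rewrite ltnn /=; exec.
apply: reaches_now; left; split=> //; split.
- by move=> d /=; rewrite m_count take_size.
- by rewrite -(take_size D).
Qed.

Definition checking_inv (d : nat) (c : config) :=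
  [/\ c.1 = 63, c.2 2 = Posz k, c.2 4 = Posz (C + n), c.2 7 = Posz (C + d) &
   [/\ forall e, c.2 (C + e) = Posz (count_mem e D), all (fun x => x < n) D,
     count_mem 0 D = 1, d < n & forall e, e < d -> count_mem e.+1 D <= k * count_mem e D]].
Definition checking_left j c := exists2 d, d + j.+1 = n & checking_inv d c.

Lemma counted_reaches_checking c : counted c ->
  reaches depth_checker c (fun c' => checking_left n.-1 c' \/ answered c') 10.
Proof.
case: c => pc m [/= -> m1 m2 m3 [m_count D_lt]].
have m_c0 a : a = C + 0 -> m a = Posz (count_mem 0 D) by move=> ->.
do 3 exec; rewrite m_c0; last lia.
do 2 exec; case: ifP => [c0_lt1|c0_ge1].
  do 2 exec; apply: reaches_now; right; split=> //; rewrite /output /=.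
  by split=> // -[D0 _]; rewrite D0 in c0_lt1.
exec; case: ifP => [c0_gt1|c0_le1].
  do 2 exec; apply: reaches_now; right; split=> //; rewrite /output /=.
  by split=> // -[D0 _]; rewrite D0 in c0_gt1.
have D0 : count_mem 0 D = 1 by move: c0_ge1 c0_le1 => /=; lia.
have n_gt0 : 0 < n by rewrite -has_predT; apply/hasP; exists 0; rewrite // -has_pred1 has_count D0.
exec; apply: reaches_now; left; exists 0; first lia.
split=> //=; decide_addr_eqs; rewrite_mem.
- by congr Posz; lia.
- by split=> // e; decide_addr_eqs; exact: m_count.
Qed.

Lemma checking_step j c : checking_left j.+1 c ->
  reaches depth_checker c (fun c' => checking_left j c' \/ answered c') 12.
Proof.
case: c => pc m [d hdj [/= -> m2 m4 m7 [m_count D_lt D0 hdn D_k]]].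
have m_cd a : a = C + d -> m a = Posz (count_mem d D) by move=> ->.
have m_cd1 a : a = C + d.+1 -> m a = Posz (count_mem d.+1 D) by move=> ->.
have next_lt : (C + d + 1 < C + n) = true by apply/idP; lia.
do 3 exec; rewrite next_lt.
exec; rewrite m_cd; last lia.
do 2 exec; rewrite m_cd1; last lia.
exec; case: ifP => bad.
  do 2 exec; apply: reaches_now; right; split=> //; rewrite /output /=.
  by split=> // -[_ /(_ d)]; rewrite leqNgt mulnC bad.
do 3 exec; apply: reaches_now; left; exists d.+1; first lia.
split=> //=; decide_addr_eqs; rewrite_mem.
- by congr Posz; lia.
- split=> //; first by move=> e; decide_addr_eqs; exact: m_count.
  + lia.
  + move=> e; rewrite ltnS leq_eqVlt => /orP[/eqP ->|]; last exact: D_k.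
    by move: bad; rewrite mulnC; case: ltnP.
Qed.

Lemma checking_exit c : checking_left 0 c -> reaches depth_checker c answered 12.
Proof.
case: c => pc m [d hdj [/= -> m2 m4 m7 [m_count D_lt D0 hdn D_k]]].
have last_ge : (C + d + 1 < C + n) = false by apply/negbTE; lia.
do 3 exec; rewrite last_ge /=.
do 2 exec; apply: reaches_now; split=> //; rewrite /output /=; split=> // _.
split=> // e; case: (ltnP e d) => hed; first exact: D_k.
have -> // : count_mem e.+1 D = 0.
by apply/count_memPn/negP => /(allP D_lt); lia.
Qed.

Lemma depth_checker_correct :
  reaches depth_checker (init k D) answered (40 + (n.+1 * 20 + (10 + n.-1.+1 * 12))).
Proof.
have init_mem i : n + 2 <= i -> (init k D).2 i = 0%R.
  move=> hi; rewrite /init /= ifN; last lia.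
  by rewrite ifN ?ifF //; [apply/negbTE; rewrite -leqNgt -addn2 | lia].
have init_depth j : j < n -> (init k D).2 (j + 2) = Posz (nth 0 D j).
  by move=> hj; rewrite /init /= addn2 /= !ltnS hj !subSS subn0.
apply: (@reaches_trans _ _ (counting_left n)).
  apply: reaches_weaken (setup_reaches_counting erefl erefl init_depth init_mem).
  by move=> c hc; exists 0.
move=> c1 c1_counting.
have counting_step' j c : counting_left j.+1 c -> reaches depth_checker c
    (fun c' => counting_left j c' \/ (counted c' \/ answered c')) 20.
  by move/counting_step; apply: reaches_weaken => c' []; auto.
apply: reaches_trans (reaches_loop counting_step' counting_exit c1_counting) _.
move=> c2 [/counted_reaches_checking c2_checking|]; last exact: reaches_now.
apply: reaches_trans c2_checking _ => c3 [|]; last exact: reaches_now.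
exact: reaches_loop checking_step checking_exit _ _.
Qed.

End DepthChecker.

Lemma leq_mul_trunc_log2 n : n <= n * trunc_log 2 n + 1.
Proof.
case: (leqP n 1) => [|n_gt1]; first lia.
by rewrite addn1 ltnW // ltnS leq_pmulr // trunc_log_gt0.
Qed.

Theorem mainTheorem8 :
  exists (P : program) (c : nat),
    forall (k : nat) (D : seq nat), 1 <= k ->
      let n := size D in
      let fin := run P (c * (n * trunc_log 2 n + 1)) (init k D) in
      halted P fin /\ (output fin <-> kary_depth_realizable k D).
Proof.
exists depth_checker, 200 => k D k_gt0 n fin.
have budget : 40 + (n.+1 * 20 + (10 + n.-1.+1 * 12)) <= 200 * (n * trunc_log 2 n + 1).
  by have := leq_mul_trunc_log2 n; lia.
have [] := reaches_halted (fun _ => @proj1 _ _) budget (depth_checker_correct D k_gt0).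
by rewrite kary_depth_realizableP.
Qed.
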